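(* With an even number of agents $n=2p$, the modified RC mechanism subgame perfect implements the majority correspondence $Maj$ in the following sense: for every preference profile $R$ with $|Maj(R)|=1$, every subgame-perfect equilibrium yields $Maj(R)$ and some subgame-perfect equilibrium yields $Maj(R)$; and for every $R$ with $Maj(R)=\{a,b\}$, a subgame-perfect equilibrium exists, any lottery over $A$ being an admissible equilibrium outcome.
   Context: Agents $I=\{1,\dots,n\}$, $n=2p$, options $A=\{a,b\}$, strict preferences, complete information; lotteries compared by stochastic dominance (an agent preferring $x$ weakly (strictly) prefers $\beta$ to $\eta$ iff $\beta(x)\ge\eta(x)$ ($>$)). Majority correspondence: $Maj(R)=a$ if at least $p+1$ agents prefer $a$, $Maj(R)=b$ if at least $p+1$ agents prefer $b$, and $Maj(R)=\{a,b\}$ otherwise. Modified RC mechanism: Voting stage: each agent simultaneously votes $v_i\in A$; the profile $v$ is publicly announced. If $a$ and $b$ receive equally many votes, the outcome is the lottery giving probability $1/2$ to each option. Otherwise the option with more votes is the Voting-stage winner, and in the Confirmation stage $p+1$ agents are drawn uniformly at random and ordered uniformly, $\pi_1,\dots,\pi_{p+1}$; sequentially, as long as nobody has announced $Y$, agent $\pi_t$ announces $Y$ or $N$. If some agent announces $Y$ the outcome is the Voting-stage winner; if all announce $N$ the outcome is the lottery $\beta(v)$ with $\beta_a(v)=|\{i:v_i=a\}|/n$, $\beta_b(v)=1-\beta_a(v)$. *)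

From HB Require Import structures.
From mathcomp Require Import all_boot all_order all_algebra.
Set Implicit Arguments.
Unset Strict Implicit.
Unset Printing Implicit Defensive.
Import Order.TTheory GRing.Theory Num.Theory.
Local Open Scope ring_scope.

(* Conventions.
   - Agents: 'I_(p.*2), i.e. n = 2p.
   - Options A = {a,b} are encoded by bool: true = a, false = b.
   - A strict preference of an agent over {a,b} is its top option, so a
     profile R is a map agent -> bool (R i = true iff i prefers a).
   - A lottery over A is represented by its probability of a (a rational);
     lprob l x is the probability it gives to option x. *)

Definition agent (p : nat) := 'I_(p.*2).
Definition vprof (p : nat) := agent p -> bool.
Definition draw (p : nat) := {ffun 'I_p.+1 -> agent p}.
(* The Confirmation-stage draw: p+1 distinct agents in uniformly random order,
   i.e. a uniformly random injective sequence. *)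
Definition draws (p : nat) : {set draw p} := [set f : draw p | injectiveb f].
(* Confirmation strategy: at decision node (v, pi, t) (all of pi_1..pi_{t-1}
   announced N), announce Y (true) or N (false). *)
Definition cstrat (p : nat) := vprof p -> draw p -> 'I_p.+1 -> bool.
Definition profile (p : nat) := ((agent p -> bool) * (agent p -> cstrat p))%type.

Definition lottery := rat.
Definition lprob (l : lottery) (x : bool) : rat := if x then l else 1 - l.

Definition nvotes_a p (v : vprof p) : nat := #|[set i | v i]|.
Definition tie p (v : vprof p) : bool := nvotes_a v == p.
(* Voting-stage winner (meaningful when not a tie): true = a. *)
Definition winner p (v : vprof p) : bool := (p < nvotes_a v)%N.
Definition beta p (v : vprof p) : lottery := (nvotes_a v)%:R / (p.*2)%:R.

(* Outcome of the confirmation play from step t on (steps < t announced N). *)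
Definition cont_outcome p (c : agent p -> cstrat p) (v : vprof p) (f : draw p)
    (t : nat) : lottery :=
  if [exists t' : 'I_p.+1, (t <= t')%N && c (f t') v f t']
  then (if winner v then 1 else 0) else beta v.

Definition nature_outcome p (c : agent p -> cstrat p) (v : vprof p) : lottery :=
  (\sum_(f in draws p) cont_outcome c v f 0) / (#|draws p|)%:R.

Definition outcome p (s : profile p) : lottery :=
  if tie s.1 then 2^-1 else nature_outcome s.2 s.1.

Definition upd (T : Type) p (g : agent p -> T) (i : agent p) (x : T) : agent p -> T :=
  fun j => if j == i then x else g j.

Definition strictly_prefers p (R : agent p -> bool) (i : agent p) (l1 l2 : lottery) : Prop :=
  lprob l2 (R i) < lprob l1 (R i).

(* Subgame perfect equilibrium: no profitable unilateral deviation in any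
   subgame (root, each Confirmation-stage subgame after a non-tied vote,
   each decision node of the Confirmation stage). *)
Definition SPE p (R : agent p -> bool) (s : profile p) : Prop :=
  [/\ (forall i x c', ~ strictly_prefers R i
          (outcome (upd s.1 i x, upd s.2 i c')) (outcome s)),
      (forall v : vprof p, ~~ tie v -> forall i c', ~ strictly_prefers R i
          (nature_outcome (upd s.2 i c') v) (nature_outcome s.2 v)) &
      (forall v : vprof p, ~~ tie v -> forall f, f \in draws p ->
        forall (t : 'I_p.+1) i c', ~ strictly_prefers R i
          (cont_outcome (upd s.2 i c') v f t) (cont_outcome s.2 v f t))].

Definition Maj p (R : agent p -> bool) : {set bool} :=
  if (p.+1 <= #|[set i | R i]|)%N then [set true]
  else if (p.+1 <= #|[set i | ~~ R i]|)%N then [set false]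
  else [set: bool].

Definition supp (l : lottery) : {set bool} := [set x | lprob l x != 0].

(* In the Confirmation stage subgame perfection leaves no choice: if some
   drawn agent prefers the Voting-stage winner, the winner is confirmed, since
   that agent can secure it by answering Y; if none does, nobody answers Y,
   since the last agent to do so would rather answer N and get beta, which
   gives positive weight to the option he prefers.  With a strict majority for
   w every draw of p+1 agents contains a supporter of w, so a vote electing w
   yields w for sure.  Any other vote is not an equilibrium: a supporter of w
   who voted against it gains by switching, as this raises the weight of w in
   beta, turns a share of w below 1/2 into the tie lottery, or turns a tie into
   a victory of w.  Truthful votes and truthful answers ("Y iff I prefer the
   winner") form an equilibrium both with a strict majority and in a tie. *)

From HB Require Import structures.
From mathcomp Require Import all_boot all_order all_algebra.
From mathcomp Require Import zify ring lra.
From Stdlib Require Import FunctionalExtensionality.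
Set Implicit Arguments. Unset Strict Implicit. Unset Printing Implicit Defensive.
Import Order.TTheory GRing.Theory Num.Theory.
Local Open Scope ring_scope.

Lemma neq_negb (x y : bool) : (x != y) = (x == ~~ y).
Proof. by case: x; case: y. Qed.

Definition sure (x : bool) : lottery := if x then 1 else 0.

Lemma lprob_sure x y : lprob (sure x) y = (x == y)%:R.
Proof. by case: x; case: y; rewrite /= ?subr0 ?subrr. Qed.

Lemma lprob_eq1 l x : lprob l x = 1 -> l = sure x.
Proof. by case: x => /= l1; rewrite /sure; lra. Qed.

Lemma lprob_half x : lprob 2^-1 x = 2^-1.
Proof. by case: x => //=; field. Qed.

Lemma supp_sure x : supp (sure x) = [set x].
Proof. by apply/setP => y; rewrite !inE lprob_sure pnatr_eq0 eqb0 negbK eq_sym. Qed.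

Section Mean.

Variables (R : numFieldType) (T : finType) (A : {set T}).

Definition mean (g : T -> R) : R := (\sum_(t in A) g t) / #|A|%:R.

Lemma mean_le g h : {in A, forall t, g t <= h t} -> mean g <= mean h.
Proof. by move=> gh; rewrite ler_wpM2r ?invr_ge0 ?ler0n ?ler_sum. Qed.

Hypothesis A_neq0 : A != set0.

Let cardA_gt0 : 0 < #|A|%:R :> R.
Proof. by rewrite ltr0n card_gt0. Qed.

Lemma mean_lt g h t0 :
  {in A, forall t, g t <= h t} -> t0 \in A -> g t0 < h t0 -> mean g < mean h.
Proof.
move=> gh At0 lt0; rewrite ltr_pM2r ?invr_gt0 // (bigD1 t0) //= [ltRHS](bigD1 t0) //=.
by rewrite ltr_leD // ler_sum // => t /andP[/gh].
Qed.

Lemma mean_eq_cst g a : {in A, forall t, g t = a} -> mean g = a.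
Proof.
move=> ga; rewrite /mean (eq_bigr _ ga) sumr_const -[_ *+ _]mulr_natr.
by rewrite mulfK // lt0r_neq0.
Qed.

Lemma mean_le_cst g a : {in A, forall t, g t <= a} -> mean g <= a.
Proof. by move=> ga; rewrite -(@mean_eq_cst (fun=> a) a) // mean_le. Qed.

Lemma mean_subr g a : mean (fun t => a - g t) = a - mean g.
Proof.
rewrite /mean sumrB sumr_const mulrBl -[_ *+ _]mulr_natr mulfK //.
exact: lt0r_neq0.
Qed.

End Mean.

Lemma lprob_mean (T : finType) (A : {set T}) (g : T -> lottery) x :
  A != set0 -> lprob (mean A g) x = mean A (fun t => lprob (g t) x).
Proof. by case: x => // A_neq0; rewrite /= mean_subr. Qed.

Lemma upd_id (T : Type) p (g : agent p -> T) i : upd g i (g i) = g.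
Proof. by apply: functional_extensionality => j; rewrite /upd; case: eqP => // ->. Qed.

Section Votes.

Variable p : nat.
Implicit Types (v : vprof p) (x : bool).

Definition votes v x : nat := #|[set j | v j == x]|.

Lemma votesN v x : (votes v x + votes v (~~ x) = p.*2)%N.
Proof.
rewrite /votes; have -> : [set j | v j == ~~ x] = ~: [set j | v j == x].
  by apply/setP => j; rewrite !inE; case: (v j); case: x.
by rewrite cardsC card_ord.
Qed.

Lemma nvotes_aE v : nvotes_a v = votes v true.
Proof. by apply: eq_card => j; rewrite !inE eqb_id. Qed.

Lemma tieE v x : tie v = (votes v x == p).
Proof.
rewrite /tie nvotes_aE; case: x => //.
by have /= vN := votesN v true; apply/eqP/eqP; lia.
Qed.

Lemma winnerE v x : ~~ tie v -> (winner v == x) = (p < votes v x)%N.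
Proof.
rewrite /winner (tieE _ true) nvotes_aE; have /= := votesN v true.
by case: x => /= vN vNt; [rewrite eqb_id | apply/idP/idP; rewrite eqbF_neg ?negbK; lia].
Qed.

Lemma majority_not_tie v x : (p < votes v x)%N -> ~~ tie v.
Proof. by rewrite (tieE _ x) neq_ltn orbC => ->. Qed.

Lemma minority_not_tie v x : (votes v x < p)%N -> ~~ tie v.
Proof. by rewrite (tieE _ x) neq_ltn => ->. Qed.

Lemma winner_majority v x : (p < votes v x)%N -> winner v = x.
Proof.
move=> vx; suff /eqP : winner v == x by [].
by rewrite winnerE ?(majority_not_tie vx).
Qed.

Lemma winner_minority v x : (votes v x < p)%N -> winner v = ~~ x.
Proof. by move=> vx; apply: winner_majority; have := votesN v x; lia. Qed.

Lemma votes_upd v i x : v i != x -> votes (upd v i x) x = (votes v x).+1.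
Proof.
move=> vix; rewrite /votes; have -> : [set j | upd v i x j == x] = i |: [set j | v j == x].
  by apply/setP => j; rewrite !inE /upd; case: (eqVneq j i) => // ->; rewrite !eqxx.
by rewrite cardsU1 inE (negbTE vix).
Qed.

Lemma votes_upd_ge v i x y : v i != y -> (votes v y <= votes (upd v i x) y)%N.
Proof.
move=> viy; apply: subset_leq_card; apply/subsetP => j; rewrite !inE /upd.
by case: (eqVneq j i) => // -> /eqP viy'; rewrite viy' eqxx in viy.
Qed.

Lemma MajE (R : agent p -> bool) : Maj R = if (p < votes R true)%N then [set true]
  else if (p < votes R false)%N then [set false] else [set: bool].
Proof.
rewrite /Maj -nvotes_aE (_ : #|[set i | ~~ R i]| = votes R false) //.
by apply: eq_card => i; rewrite !inE eqbF_neg.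
Qed.

Lemma Maj_card1 (R : agent p -> bool) : #|Maj R| = 1%N -> exists2 w, Maj R = [set w] & (p < votes R w)%N.
Proof.
rewrite MajE; case: ifP => [Rt _|_]; first by exists true.
case: ifP => [Rf _|_]; first by exists false.
by rewrite cardsT card_bool.
Qed.

Lemma Maj_setT (R : agent p -> bool) : Maj R = [set: bool] -> forall x, (votes R x <= p)%N.
Proof.
rewrite MajE; case: ifP => [_ /setP/(_ false)|Rt]; first by rewrite !inE.
case: ifP => [_ /setP/(_ true)|Rf _]; first by rewrite !inE.
by case; rewrite leqNgt ?Rt ?Rf.
Qed.

End Votes.

Section Draws.

Variable p : nat.

Lemma draw_meets (S : {set agent p}) f :
  f \in draws p -> (p <= #|S|)%N -> exists j, f j \in S.
Proof.
rewrite inE => /injectiveP f_inj Sp; apply/existsP; apply: contraTT Sp => /existsPn fS.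
have /subset_leq_card : f @: [set: 'I_p.+1] \subset ~: S.
  by apply/subsetP => _ /imsetP[j _ ->]; rewrite inE fS.
have := cardsC S; rewrite card_imset // cardsT !card_ord.
by move: #|S| #|~: S| => a b; rewrite -addnn; lia.
Qed.

Lemma exists_draw_within (S : {set agent p}) :
  (p < #|S|)%N -> exists2 f, f \in draws p & forall j, f j \in S.
Proof.
move=> Sp; exists [ffun j => enum_val (widen_ord Sp j)]; last first.
  by move=> j; rewrite ffunE enum_valP.
by rewrite inE; apply/injectiveP => i j; rewrite !ffunE => /enum_val_inj [] /val_inj.
Qed.

Lemma draws_neq0 : (0 < p)%N -> draws p != set0.
Proof.
move=> p_gt0; have [|f fD _] := @exists_draw_within [set: agent p].
  by rewrite cardsT card_ord; lia.
by apply/set0Pn; exists f.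
Qed.

End Draws.

Section Beta.

Variable p : nat.
Hypothesis p_gt0 : (0 < p)%N.
Implicit Types (v : vprof p) (x : bool).

Let p2_gt0 : 0 < (p.*2)%:R :> rat.
Proof. by rewrite ltr0n double_gt0. Qed.

Lemma lprob_beta v x : lprob (beta v) x = (votes v x)%:R / (p.*2)%:R.
Proof.
rewrite /beta nvotes_aE; case: x => //=; have /= <- := votesN v true.
by rewrite natrD; field; rewrite lt0r_neq0 // -natrD votesN.
Qed.

Lemma lprob_beta_ge0 v x : 0 <= lprob (beta v) x.
Proof. by rewrite lprob_beta divr_ge0. Qed.

Lemma lprob_beta_le1 v x : lprob (beta v) x <= 1.
Proof.
by rewrite lprob_beta ler_pdivrMr // mul1r ler_nat -(votesN v x) leq_addr.
Qed.

Lemma lprob_beta_lt v v' x :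
  (votes v x < votes v' x)%N -> lprob (beta v) x < lprob (beta v') x.
Proof. by move=> vv'; rewrite !lprob_beta ltr_pM2r ?invr_gt0 // ltr_nat. Qed.

Lemma lprob_beta_gt0 v x : (0 < votes v x)%N -> 0 < lprob (beta v) x.
Proof. by move=> vx; rewrite lprob_beta divr_gt0 // ltr0n. Qed.

Lemma lprob_beta_lt_half v x : (votes v x < p)%N -> lprob (beta v) x < 2^-1.
Proof.
move=> vxp; rewrite lprob_beta ltr_pdivrMr // -muln2 natrM.
have : (votes v x).+1%:R <= p%:R :> rat by rewrite ler_nat.
by rewrite -addn1 natrD; lra.
Qed.

End Beta.

Lemma not_strictly_prefers p (R : agent p -> bool) i l1 l2 :
  ~ strictly_prefers R i l1 l2 <-> lprob l1 (R i) <= lprob l2 (R i).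
Proof. by rewrite /strictly_prefers leNgt; split=> [/negP | /negP]. Qed.

Section Confirmation.

Variables (p : nat) (R : agent p -> bool).
Hypothesis p_gt0 : (0 < p)%N.
Implicit Types (v : vprof p) (c : agent p -> cstrat p) (f : draw p).

Definition confirmed c v f (t : nat) : bool :=
  [exists t' : 'I_p.+1, (t <= t')%N && c (f t') v f t'].

Lemma cont_outcomeE c v f t :
  cont_outcome c v f t = if confirmed c v f t then sure (winner v) else beta v.
Proof. by []. Qed.

Lemma cont_outcome_confirmed c v f t (j : 'I_p.+1) :
  (t <= j)%N -> c (f j) v f j -> cont_outcome c v f t = sure (winner v).
Proof.
by move=> tj cj; rewrite cont_outcomeE ifT //; apply/existsP; exists j; rewrite tj.
Qed.

Lemma nature_outcomeE c v :
  nature_outcome c v = mean (draws p) (fun f => cont_outcome c v f 0).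
Proof. by []. Qed.

Lemma lprob_cont_outcome_le1 c v f t x : lprob (cont_outcome c v f t) x <= 1.
Proof.
rewrite cont_outcomeE; case: ifP => _; last exact: lprob_beta_le1.
by rewrite lprob_sure lern1 leq_b1.
Qed.

Lemma lprob_cont_outcome_le_beta c v f t x :
  winner v != x -> lprob (cont_outcome c v f t) x <= lprob (beta v) x.
Proof.
move=> vx; rewrite cont_outcomeE; case: ifP => // _.
by rewrite lprob_sure (negbTE vx) lprob_beta_ge0.
Qed.

Lemma lprob_cont_outcome_mono c1 c2 v f t x :
  (if winner v == x then confirmed c1 v f t ==> confirmed c2 v f t
   else confirmed c2 v f t ==> confirmed c1 v f t) ->
  lprob (cont_outcome c1 v f t) x <= lprob (cont_outcome c2 v f t) x.
Proof.
rewrite !cont_outcomeE; case wx: (winner v == x).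
  by case: (confirmed c1 v f t) (confirmed c2 v f t) => [] [] //= _;
    rewrite lprob_sure wx lprob_beta_le1.
by case: (confirmed c1 v f t) (confirmed c2 v f t) => [] [] //= _;
  rewrite lprob_sure wx lprob_beta_ge0.
Qed.

Lemma lprob_nature_outcome_le1 c v x : lprob (nature_outcome c v) x <= 1.
Proof.
rewrite nature_outcomeE lprob_mean ?draws_neq0 //.
by apply: mean_le_cst => [|f _]; [exact: draws_neq0 | exact: lprob_cont_outcome_le1].
Qed.

Lemma lprob_nature_outcome_le_beta c v x :
  winner v != x -> lprob (nature_outcome c v) x <= lprob (beta v) x.
Proof.
move=> vx; rewrite nature_outcomeE lprob_mean ?draws_neq0 //.
by apply: mean_le_cst => [|f _]; [exact: draws_neq0 | exact: lprob_cont_outcome_le_beta].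
Qed.

Definition confirmation_SPE c := forall v, ~~ tie v -> forall f, f \in draws p ->
  forall (t : 'I_p.+1) i (c' : cstrat p), ~ strictly_prefers R i
    (cont_outcome (upd c i c') v f t) (cont_outcome c v f t).

Lemma confirmation_SPE_nature c : confirmation_SPE c ->
  forall v, ~~ tie v -> forall i (c' : cstrat p), ~ strictly_prefers R i
    (nature_outcome (upd c i c') v) (nature_outcome c v).
Proof.
move=> cSPE v vt i c'; apply/not_strictly_prefers.
rewrite !nature_outcomeE !lprob_mean ?draws_neq0 //; apply: mean_le => f fD.
exact/not_strictly_prefers/(cSPE v vt f fD ord0).
Qed.

Lemma confirmation_SPE_supporter c v f j : confirmation_SPE c ->
  ~~ tie v -> f \in draws p -> R (f j) = winner v ->
  cont_outcome c v f 0 = sure (winner v).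
Proof.
move=> cSPE vt fD Rj; apply/lprob_eq1/le_anti; rewrite lprob_cont_outcome_le1 /=.
have /not_strictly_prefers := cSPE v vt f fD ord0 (f j) (fun _ _ _ => true).
rewrite Rj (@cont_outcome_confirmed _ _ _ _ j) ?lprob_sure ?eqxx //.
by rewrite /upd eqxx.
Qed.

Lemma confirmation_SPE_opponents c v f : confirmation_SPE c ->
  ~~ tie v -> f \in draws p -> (forall j, R (f j) = ~~ winner v) ->
  0 < lprob (beta v) (~~ winner v) -> cont_outcome c v f 0 = beta v.
Proof.
move=> cSPE vt fD opp beta_gt0; rewrite cont_outcomeE; case: ifP => // /existsP[t0 /andP[_ ct0]].
case: (@arg_maxnP _ t0 (fun t => c (f t) v f t) val ct0) => tm ctm tm_max.
(* the last agent to say Y would rather say N *)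
have /not_strictly_prefers := cSPE v vt f fD tm (f tm) (fun _ _ _ => false).
rewrite !cont_outcomeE ifF; last first.
  apply/existsP => -[t /andP[tmt]]; rewrite /upd; case: eqP => // ftm ct.
  suff tm_t : t = tm by rewrite tm_t in ftm.
  by apply/val_inj/eqP; rewrite eqn_leq tmt andbT; exact: tm_max.
rewrite ifT; last by apply/existsP; exists tm; rewrite leqnn.
by rewrite opp lprob_sure; case: (winner v) beta_gt0 => /=; lra.
Qed.

Definition truthful_confirmation : agent p -> cstrat p :=
  fun i v _ _ => R i == winner v.

(* Truthful answers already give a supporter of the winner every Y, and an
   opponent none, that a deviation could add or remove. *)
Lemma confirmation_SPE_truthful : confirmation_SPE truthful_confirmation.
Proof.
move=> v _ f _ t i c'; apply/not_strictly_prefers/lprob_cont_outcome_mono.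
rewrite eq_sym; case: ifP => Ri; apply/implyP => /existsP[t' /andP[tt' ct']];
  apply/existsP; exists t'; rewrite tt' /=; move: ct'; rewrite /upd.
- by case: eqP => [-> _|//]; rewrite /truthful_confirmation Ri.
- by case: eqP => // fi; rewrite /truthful_confirmation fi Ri.
Qed.

End Confirmation.

Section Voting.

Variables (p : nat) (R : agent p -> bool).
Hypothesis p_gt0 : (0 < p)%N.
Implicit Types (v : vprof p) (c : agent p -> cstrat p) (w : bool).

Definition truthful : profile p := (R, truthful_confirmation R).

Lemma lprob_outcome_le1 (s : profile p) x : lprob (outcome s) x <= 1.
Proof.
rewrite /outcome; case: ifP => _; last exact: lprob_nature_outcome_le1.
by rewrite lprob_half invf_le1 ?ler1n.
Qed.

Lemma nature_outcome_sure c v :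
  {in draws p, forall f, cont_outcome c v f 0 = sure (winner v)} ->
  nature_outcome c v = sure (winner v).
Proof. by move=> cf; rewrite nature_outcomeE (mean_eq_cst (draws_neq0 p_gt0) cf). Qed.

Lemma draw_meets_majority w f :
  (p < votes R w)%N -> f \in draws p -> exists j, R (f j) = w.
Proof.
move=> Rw fD; have [|j] := draw_meets (S := [set j | R j == w]) fD; first exact: ltnW.
by rewrite inE => /eqP; exists j.
Qed.

Lemma nature_outcome_majority c v w : confirmation_SPE R c -> (p < votes R w)%N ->
  ~~ tie v -> winner v = w -> nature_outcome c v = sure w.
Proof.
move=> cSPE Rw vt vw; rewrite -vw; apply: nature_outcome_sure => f fD.
have [j Rj] := draw_meets_majority Rw fD.
exact: (confirmation_SPE_supporter p_gt0 (j := j) cSPE vt fD (etrans Rj (esym vw))).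
Qed.

Lemma nature_outcome_vote_gain c v i w : confirmation_SPE R c -> (p < votes R w)%N ->
  v i != w -> ((votes v w).+1 < p)%N ->
  lprob (nature_outcome c v) w < lprob (nature_outcome c (upd v i w)) w.
Proof.
move=> cSPE Rw viw vw1; set v' := upd v i w.
have v'w : votes v' w = (votes v w).+1 by exact: votes_upd.
have vt : ~~ tie v by apply: (@minority_not_tie _ _ w); lia.
have v't : ~~ tie v' by apply: (@minority_not_tie _ _ w); lia.
have vl : winner v = ~~ w by apply: winner_minority; lia.
have v'l : winner v' = ~~ w by apply: winner_minority; lia.
have gain_all_w f : f \in draws p -> (forall j, R (f j) = w) ->
    lprob (cont_outcome c v f 0) w < lprob (cont_outcome c v' f 0) w.
  move=> fD fw; rewrite (confirmation_SPE_opponents cSPE v't fD); first last.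
  - by rewrite v'l negbK lprob_beta_gt0 // v'w.
  - by move=> j; rewrite fw v'l negbK.
  apply: le_lt_trans (lprob_beta_lt p_gt0 _); last by rewrite v'w.
  by apply: (lprob_cont_outcome_le_beta p_gt0); rewrite neq_negb vl.
have [f0 f0D f0w] := exists_draw_within Rw.
rewrite !nature_outcomeE !lprob_mean ?draws_neq0 //.
apply: (mean_lt (draws_neq0 p_gt0) _ f0D); last first.
  by apply: gain_all_w => // j; apply/eqP; have := f0w j; rewrite inE.
move=> f fD; have [/forallP fw|/forallPn[j Rj]] := boolP [forall j, R (f j) == w].
  by apply/ltW/gain_all_w => // j; apply/eqP.
(* a draw containing an opponent of w confirms ~~ w both before and after *)
rewrite neq_negb in Rj; move/eqP: Rj => Rj.
rewrite (confirmation_SPE_supporter p_gt0 (j := j) cSPE vt fD) ?vl //.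
by rewrite (confirmation_SPE_supporter p_gt0 (j := j) cSPE v't fD) ?v'l.
Qed.

Lemma outcome_vote_gain c v i w : confirmation_SPE R c -> (p < votes R w)%N ->
  (votes v w <= p)%N -> v i != w ->
  lprob (outcome (v, c)) w < lprob (outcome (upd v i w, c)) w.
Proof.
move=> cSPE Rw vwp viw; set v' := upd v i w.
have v'w : votes v' w = (votes v w).+1 by exact: votes_upd.
rewrite /outcome /= (tieE v w) (tieE v' w) v'w.
have v'_maj : (p < (votes v w).+1)%N -> nature_outcome c v' = sure w.
  rewrite -v'w => v'p.
  exact: nature_outcome_majority cSPE Rw (majority_not_tie v'p) (winner_majority v'p).
case: (ltngtP (votes v w).+1 p) => [vw1|vw1|vw1].
- rewrite ifF; last by rewrite ltn_eqF // ltnW.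
  exact: nature_outcome_vote_gain cSPE Rw viw vw1.
- rewrite ifT; last by rewrite eqn_leq vwp.
  by rewrite v'_maj // lprob_half lprob_sure eqxx /= invf_lt1 ?ltr1n.
- have vw_lt : (votes v w < p)%N by lia.
  rewrite ifF ?ltn_eqF // lprob_half.
  apply: le_lt_trans (lprob_beta_lt_half p_gt0 vw_lt).
  by apply: (lprob_nature_outcome_le_beta p_gt0); rewrite neq_negb (winner_minority vw_lt).
Qed.

Lemma SPE_outcome_majority (s : profile p) w :
  (p < votes R w)%N -> SPE R s -> outcome s = sure w.
Proof.
case: s => v c Rw [/= root_SPE _ cSPE].
have [vw|vwp] := ltnP p (votes v w).
  rewrite /outcome /= (negbTE (majority_not_tie vw)).
  exact: nature_outcome_majority cSPE Rw (majority_not_tie vw) (winner_majority vw).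
have /subsetPn[i] : ~~ ([set j | R j == w] \subset [set j | v j == w]).
  by apply/negP => /subset_leq_card; rewrite -/(votes R w) -/(votes v w); lia.
rewrite !inE => /eqP Ri viw.
have /not_strictly_prefers := root_SPE i w (c i).
by rewrite upd_id Ri leNgt outcome_vote_gain.
Qed.

Lemma truthful_outcome_majority w : (p < votes R w)%N -> outcome truthful = sure w.
Proof.
move=> Rw; rewrite /outcome /= (negbTE (majority_not_tie Rw)).
exact: nature_outcome_majority (@confirmation_SPE_truthful _ R p_gt0) Rw
  (majority_not_tie Rw) (winner_majority Rw).
Qed.

Lemma truthful_SPE_majority w : (p < votes R w)%N -> SPE R truthful.
Proof.
move=> Rw; split; last 2 first.
- exact/confirmation_SPE_nature/confirmation_SPE_truthful.
- exact: confirmation_SPE_truthful.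
move=> i x c'; apply/not_strictly_prefers; rewrite (truthful_outcome_majority Rw).
have [<-|Riw] := eqVneq w (R i); first by rewrite lprob_sure eqxx lprob_outcome_le1.
set v' := upd R i x; have v'w : (p < votes v' w)%N.
  by apply: leq_trans Rw _; apply: votes_upd_ge; rewrite eq_sym.
suff -> : outcome (v', upd (truthful_confirmation R) i c') = sure w by [].
rewrite /outcome /= (negbTE (majority_not_tie v'w)) -(winner_majority v'w).
apply: nature_outcome_sure => f fD; have [j Rj] := draw_meets_majority Rw fD.
apply: (cont_outcome_confirmed (j := j)) => //.
rewrite /upd ifF; last by apply/negbTE; apply: contra_neq Riw => <-.
by rewrite /truthful_confirmation Rj (winner_majority v'w).
Qed.

Lemma truthful_SPE_tie : (forall x, (votes R x <= p)%N) -> SPE R truthful.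
Proof.
move=> Rp; have Rt : tie R.
  rewrite (tieE _ true); have /= := votesN R true; rewrite -addnn.
  by have := Rp true; have := Rp false; lia.
split; last 2 first.
- exact/confirmation_SPE_nature/confirmation_SPE_truthful.
- exact: confirmation_SPE_truthful.
move=> i x c'; apply/not_strictly_prefers; rewrite /outcome /= Rt lprob_half.
have [->|xRi] := eqVneq x (R i); first by rewrite upd_id Rt lprob_half.
have x_def : x = ~~ R i by apply/eqP; rewrite -neq_negb.
have Rx : votes R x = p by apply/eqP; rewrite -tieE.
set v' := upd R i x; have v'x : votes v' x = p.+1.
  by rewrite votes_upd ?Rx // eq_sym.
have v'Ri : (votes v' (R i) < p)%N by have := votesN v' (R i); rewrite -x_def v'x; lia.
rewrite (negbTE (minority_not_tie v'Ri)).
apply: le_trans (ltW (lprob_beta_lt_half p_gt0 v'Ri)).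
by apply: (lprob_nature_outcome_le_beta p_gt0); rewrite neq_negb (winner_minority v'Ri).
Qed.

End Voting.

Local Close Scope ring_scope.

Theorem claim2 (p : nat) (hp : (0 < p)%N) :
  (forall R : agent p -> bool, #|Maj R| = 1%N ->
     (forall s : profile p, SPE R s -> supp (outcome s) \subset Maj R) /\
     (exists s : profile p, SPE R s /\ supp (outcome s) \subset Maj R)) /\
  (forall R : agent p -> bool, Maj R = [set: bool] ->
     exists s : profile p, SPE R s).
Proof.
split=> R.
- case/Maj_card1 => w -> Rw; split.
  + by move=> s sSPE; rewrite (SPE_outcome_majority hp Rw sSPE) supp_sure.
  + exists (truthful R); split; first exact: truthful_SPE_majority Rw.
    by rewrite (truthful_outcome_majority hp Rw) supp_sure.
- by move/Maj_setT=> Rp; exists (truthful R); apply: truthful_SPE_tie.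
Qed.
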